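(* Let $P$ be a finite connected poset such that $J(P)$ is tCDE with edge density $c=\mathbb{E}(\mathrm{uni}_{J(P)};\mathrm{ddeg})$. Then the antichain cardinality statistic $I\mapsto\#\max(I)$ has average exactly $c$ along every orbit of rowmotion $\Phi_{\mathrm{row}}$ acting on $J(P)$. If moreover $P$ is ranked with maximum rank $r$, then the same holds for every orbit of $\Phi_{\mathrm{row}(\sigma)}$ acting on $J(P)$, for every permutation $\sigma$ of $\{0,1,\ldots,r\}$.
   Context: $J(P)$ is the lattice of order ideals of $P$ under inclusion; $\mathrm{ddeg}(I)$ (the number of elements covered by $I$) equals $\#\max(I)$; $\mathrm{uni}$ is uniform. $\mathcal{T}^+_p(I)=1$ iff $p\notin I$ and $p$ minimal in $P\setminus I$; $\mathcal{T}^-_p(I)=1$ iff $p\in I$ and $p$ maximal in $I$. $\mu$ is toggle-symmetric if $\mathbb{E}(\mu;\mathcal{T}^+_p)=\mathbb{E}(\mu;\mathcal{T}^-_p)$ for all $p$; $J(P)$ is tCDE if $\mathbb{E}(\mu;\mathrm{ddeg})=\mathbb{E}(\mathrm{uni}_{J(P)};\mathrm{ddeg})$ for every toggle-symmetric $\mu$. Rowmotion: $\Phi_{\mathrm{row}}(I):=\{x\in P: x\le y\text{ for some }y\in\min(P\setminus I)\}$. For ranked $P$ (rank function with $0$ in its image, increasing by 1 along covers), the toggle $\tau_p$ adds $p$ to $I$ if $p\notin I$ is minimal in $P\setminus I$, removes $p$ if $p\in I$ is maximal in $I$, and otherwise fixes $I$; $\tau_i$ is the composition of all $\tau_p$ with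 $\mathrm{rk}(p)=i$; $\Phi_{\mathrm{row}(\sigma)}:=\tau_{\sigma(0)}\circ\cdots\circ\tau_{\sigma(r)}$. *)

From HB Require Import structures.
From mathcomp Require Import all_boot all_order all_algebra all_fingroup.
Set Implicit Arguments. Unset Strict Implicit. Unset Printing Implicit Defensive.
Import Order.Theory GRing.Theory Num.Theory.

Section Defs.
Context {d : Order.disp_t} {T : finPOrderType d}.

Definition connected_poset : Prop :=
  0 < #|T| /\ forall x y : T, connect (fun a b : T => (a >=< b)%O) x y.

(* order ideals (down-closed subsets); J(P) = the ideals, ordered by inclusion *)
Definition is_ideal (I : {set T}) : bool :=
  [forall y, (y \in I) ==> [forall x, (x <= y)%O ==> (x \in I)]].

Definition maxset (I : {set T}) : {set T} :=
  [set x in I | [forall y, (y \in I) ==> ~~ (x < y)%O]].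

Definition minset_compl (I : {set T}) : {set T} :=
  [set x | (x \notin I) && [forall y, (y < x)%O ==> (y \in I)]].

Definition ideal_covered (J I : {set T}) : bool :=
  [&& is_ideal J, is_ideal I, J \proper I &
   [forall K : {set T}, ~~ [&& is_ideal K, J \proper K & K \proper I]]].

Definition ddeg (I : {set T}) : nat := #|[set J | ideal_covered J I]|.

Definition Tplus (p : T) (I : {set T}) : nat := p \in minset_compl I.
Definition Tminus (p : T) (I : {set T}) : nat := p \in maxset I.

Definition expect {R : realFieldType} (mu : {set T} -> R) (f : {set T} -> nat) : R :=
  (\sum_(I : {set T} | is_ideal I) mu I * (f I)%:R)%R.

Definition is_distribution {R : realFieldType} (mu : {set T} -> R) : Prop :=
  (forall I, is_ideal I -> 0 <= mu I)%R /\
  (\sum_(I : {set T} | is_ideal I) mu I = 1)%R.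

Definition uni {R : realFieldType} : {set T} -> R :=
  fun _ => (#|[set I : {set T} | is_ideal I]|%:R)^-1%R.

Definition toggle_symmetric {R : realFieldType} (mu : {set T} -> R) : Prop :=
  forall p : T, expect mu (Tplus p) = expect mu (Tminus p).

Definition tCDE (R : realFieldType) : Prop :=
  forall mu : {set T} -> R, is_distribution mu -> toggle_symmetric mu ->
    expect mu ddeg = expect (@uni R) ddeg.

Definition rowmotion (I : {set T}) : {set T} :=
  [set x | [exists y, (y \in minset_compl I) && (x <= y)%O]].

Definition covers (x y : T) : bool :=
  (x < y)%O && [forall z, ~~ ((x < z)%O && (z < y)%O)].

Definition ranked (rk : T -> nat) : Prop :=
  (exists x, rk x = 0) /\ forall x y, covers x y -> rk y = (rk x).+1.

Definition toggle (p : T) (I : {set T}) : {set T} :=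
  if p \in minset_compl I then p |: I
  else if p \in maxset I then I :\ p else I.

Definition rank_toggle (rk : T -> nat) (i : nat) (I : {set T}) : {set T} :=
  foldr toggle I [seq p <- enum T | rk p == i].

(* Phi_row(sigma) = tau_{sigma(0)} o ... o tau_{sigma(r)} *)
Definition rowmotion_sigma (rk : T -> nat) (r : nat) (s : 'S_r.+1)
    (I : {set T}) : {set T} :=
  foldr (fun i J => rank_toggle rk (val (s i)) J) I (enum 'I_r.+1).

Definition orbit_avg_antichain {R : realFieldType} (f : {set T} -> {set T})
    (I : {set T}) : R :=
  ((\sum_(J <- fingraph.orbit f I) (#|maxset J|)%:R) / (size (fingraph.orbit f I))%:R)%R.

End Defs.

(* Since #max(I) is the down-degree of I, it suffices to check that the
   uniform distribution on an orbit is toggle-symmetric, i.e. that along the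
   orbit every p is as often addable (T+_p) as removable (T-_p); tCDE then
   gives the orbit average.  For rowmotion, max(Phi_row I) = min(P \ I), so
   T-_p o Phi_row = T+_p and the orbit sums agree after a shift.  For
   Phi_row(sigma) = A o tau_i o B with i = rk p, p changes only at the tau_i
   step, so along the orbit T+_p and T-_p of B(I) have equal sums; and the sum
   of T+_p (resp. T-_p) equals one of these two sums, depending on whether the
   rank i - 1 (resp. i + 1) is toggled in A or in B. *)
From Pilot Require Import Defs.
From HB Require Import structures.
From mathcomp Require Import all_boot all_order all_algebra all_fingroup.
Set Implicit Arguments. Unset Strict Implicit. Unset Printing Implicit Defensive.
Import Order.Theory GRing.Theory Num.Theory.

Section OrbitIn.
Variables (aT : finType) (S : {pred aT}) (f : aT -> aT).
Hypotheses (f_in : {homo f : x / x \in S}) (f_inj : {in S &, injective f}).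

Lemma orbit_sub x : x \in S -> {subset fingraph.orbit f x <= S}.
Proof. by move=> xS y; rewrite -fconnect_orbit => /iter_findex <-; apply: iter_in. Qed.

Lemma perm_map_orbit x : x \in S ->
  perm_eq (map f (fingraph.orbit f x)) (fingraph.orbit f x).
Proof.
move=> xS; have sub_S := orbit_sub xS.
have uniq_fs : uniq (map f (fingraph.orbit f x)).
  by rewrite map_inj_in_uniq ?orbit_uniq // => y z /sub_S yS /sub_S zS /f_inj->.
apply: uniq_perm; rewrite ?orbit_uniq //.
have f_orbit : {subset map f (fingraph.orbit f x) <= fingraph.orbit f x}.
  by move=> _ /mapP[y y_orbit ->]; exact: fingraph.mem_orbit y_orbit.
by have [] := uniq_min_size uniq_fs f_orbit; rewrite ?size_map.
Qed.

Lemma big_map_orbit (R : Type) (idx : R) (op : Monoid.com_law idx) (F : aT -> R) x :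
  x \in S ->
  \big[op/idx]_(y <- fingraph.orbit f x) F (f y)
    = \big[op/idx]_(y <- fingraph.orbit f x) F y.
Proof. by move=> xS; rewrite -(big_map f xpredT); apply/perm_big/perm_map_orbit. Qed.

End OrbitIn.

Lemma eq_orbit (aT : finType) (f g : aT -> aT) :
  f =1 g -> fingraph.orbit f =1 fingraph.orbit g.
Proof.
move=> fg x; rewrite /fingraph.orbit /fingraph.order (eq_card (eq_fconnect fg x)).
move: #|_| => n; elim: n x => [|n IHn] x //=.
by rewrite fg IHn.
Qed.

Lemma mem_map_perm_ord n (s : 'S_n) j : j < n -> j \in [seq val (s i) | i <- enum 'I_n].
Proof.
by move=> lt_jn; apply/mapP; exists (s^-1 (Ordinal lt_jn))%g; rewrite ?mem_enum ?permKV.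
Qed.

Section Ideals.
Context {d : Order.disp_t} {T : finPOrderType d}.
Implicit Types (I J K : {set T}) (p x y z : T).

Lemma idealP K : reflect (forall x y, y \in K -> (x <= y)%O -> x \in K) (is_ideal K).
Proof.
apply: (iffP forallP) => [K_ideal x y yK le_xy | K_down y].
  by move/implyP: (K_ideal y) => /(_ yK) /forallP /(_ x) /implyP; apply.
by apply/implyP=> yK; apply/forallP=> x; apply/implyP; apply: K_down.
Qed.

Definition down_card x := #|[set w | (w < x)%O]|.

Lemma down_card_lt x y : (x < y)%O -> down_card x < down_card y.
Proof.
move=> lt_xy; apply: proper_card; apply/properP; split.
  by apply/subsetP=> w; rewrite !inE => /lt_trans; apply.
by exists x; rewrite !inE ?lt_xy ?ltxx.
Qed.

Lemma exists_lower_cover x y : (x < y)%O -> exists2 z, covers z y & (x <= z)%O.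
Proof.
move=> lt_xy; pose P z := (x <= z)%O && (z < y)%O.
have Px : P x by rewrite /P lexx.
have [z /andP[le_xz lt_zy] z_max] := arg_maxnP down_card Px.
exists z => //; apply/andP; split=> //; apply/forallP=> w; apply/negP=> /andP[lt_zw lt_wy].
have := z_max w; rewrite /P (le_trans le_xz (ltW lt_zw)) lt_wy => /(_ isT) /=.
by rewrite leqNgt down_card_lt.
Qed.

Lemma exists_upper_cover x y : (x < y)%O -> exists2 z, covers x z & (z <= y)%O.
Proof.
move=> lt_xy; pose P z := (x < z)%O && (z <= y)%O.
have Py : P y by rewrite /P lexx lt_xy.
have [z /andP[lt_xz le_zy] z_min] := arg_minnP down_card Py.
exists z => //; apply/andP; split=> //; apply/forallP=> w; apply/negP=> /andP[lt_xw lt_wz].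
have := z_min w; rewrite /P lt_xw (le_trans (ltW lt_wz) le_zy) => /(_ isT) /=.
by rewrite leqNgt down_card_lt.
Qed.

Lemma exists_minset_compl J x : x \notin J -> exists2 y, y \in minset_compl J & (y <= x)%O.
Proof.
move=> xJ; pose P y := (y \notin J) && (y <= x)%O.
have Px : P x by rewrite /P xJ lexx.
have [y /andP[yJ le_yx] y_min] := arg_minnP down_card Px.
exists y => //; rewrite inE yJ; apply/forallP=> w; apply/implyP=> lt_wy.
apply/negPn/negP=> wJ; have := y_min w; rewrite /P wJ (le_trans (ltW lt_wy) le_yx).
by move=> /(_ isT) /=; rewrite leqNgt down_card_lt.
Qed.

Definition lower_covers_in p K := [forall z, covers z p ==> (z \in K)].
Definition upper_covers_out p K := [forall z, covers p z ==> (z \notin K)].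

Lemma eq_lower_covers_in p K1 K2 :
  (forall z, covers z p -> (z \in K1) = (z \in K2)) ->
  lower_covers_in p K1 = lower_covers_in p K2.
Proof. by move=> eqK; apply: eq_forallb => z; case: (boolP (covers z p)) => //= /eqK. Qed.

Lemma eq_upper_covers_out p K1 K2 :
  (forall z, covers p z -> (z \in K1) = (z \in K2)) ->
  upper_covers_out p K1 = upper_covers_out p K2.
Proof. by move=> eqK; apply: eq_forallb => z; case: (boolP (covers p z)) => //= /eqK->. Qed.

Lemma ideal_lower_covers_in K p : is_ideal K -> p \in K -> lower_covers_in p K.
Proof.
move=> /idealP K_down pK; apply/forallP=> z; apply/implyP=> /andP[lt_zp _].
exact: K_down (ltW lt_zp).
Qed.

Lemma ideal_upper_covers_out K p : is_ideal K -> p \notin K -> upper_covers_out p K.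
Proof.
move=> /idealP K_down pK; apply/forallP=> z; apply/implyP=> /andP[lt_pz _].
by apply: contra pK => zK; apply: K_down (ltW lt_pz).
Qed.

Lemma minset_complE K p : is_ideal K ->
  (p \in minset_compl K) = (p \notin K) && lower_covers_in p K.
Proof.
move=> /idealP K_down; rewrite inE; congr (_ && _).
apply/forallP/forallP=> below_in z; apply/implyP.
  by move=> /andP[lt_zp _]; apply: (implyP (below_in z)).
move=> /exists_lower_cover[w cover_wp le_zw].
exact: K_down (implyP (below_in w) cover_wp) le_zw.
Qed.

Lemma maxsetE K p : is_ideal K ->
  (p \in Defs.maxset K) = (p \in K) && upper_covers_out p K.
Proof.
move=> /idealP K_down; rewrite inE; case: (boolP (p \in K)) => //= pK.
apply/forallP/forallP=> above_out z; apply/implyP.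
  move=> /andP[lt_pz _]; apply/negP=> zK.
  by move: (implyP (above_out z) zK); rewrite lt_pz.
move=> zK; apply/negP=> /exists_upper_cover[w cover_pw le_wz].
by move: (implyP (above_out w) cover_pw); rewrite (K_down w z zK le_wz).
Qed.

Definition toggleable p K := (p \in minset_compl K) || (p \in Defs.maxset K).

Lemma toggleableE K p : is_ideal K ->
  toggleable p K = lower_covers_in p K && upper_covers_out p K.
Proof.
move=> K_ideal; rewrite /toggleable minset_complE // maxsetE //.
case: (boolP (p \in K)) => pK /=.
  by rewrite ideal_lower_covers_in.
by rewrite ideal_upper_covers_out // !andbT orbF.
Qed.

Lemma minset_compl_toggleable K p :
  (p \in minset_compl K) = (p \notin K) && toggleable p K.
Proof.
rewrite /toggleable; case: (boolP (p \in minset_compl K)) => [|_] /=.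
  by rewrite inE => /andP[->].
by case: (boolP (p \in Defs.maxset K)); rewrite ?andbF // inE => /andP[->].
Qed.

Lemma maxset_toggleable K p : (p \in Defs.maxset K) = (p \in K) && toggleable p K.
Proof.
rewrite /toggleable; case: (boolP (p \in Defs.maxset K)) => [|_] /=.
  by rewrite orbT inE => /andP[->].
by case: (boolP (p \in minset_compl K)); rewrite ?andbF // inE => /andP[/negbTE->].
Qed.

Lemma eq_toggleable K1 K2 p : is_ideal K1 -> is_ideal K2 ->
  (forall z, covers z p || covers p z -> (z \in K1) = (z \in K2)) ->
  toggleable p K1 = toggleable p K2.
Proof.
move=> K1_ideal K2_ideal eqK; rewrite !toggleableE //.
congr (_ && _); [apply: eq_lower_covers_in | apply: eq_upper_covers_out];
  by move=> z cover; apply: eqK; rewrite cover ?orbT.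
Qed.

Lemma ideal_setU1 J p : is_ideal J -> p \in minset_compl J -> is_ideal (p |: J).
Proof.
move=> /idealP J_down; rewrite inE => /andP[_ /forallP below_in].
apply/idealP=> x y; rewrite !inE => /orP[/eqP-> | yJ] le_xy.
  by move: le_xy; rewrite le_eqVlt => /orP[-> // | /(implyP (below_in x))->]; rewrite orbT.
by rewrite (J_down x y yJ le_xy) orbT.
Qed.

Lemma ideal_setD1 I p : is_ideal I -> p \in Defs.maxset I -> is_ideal (I :\ p).
Proof.
move=> /idealP I_down; rewrite inE => /andP[_ /forallP p_max].
apply/idealP=> x y; rewrite !inE => /andP[neq_yp yI] le_xy.
rewrite (I_down x y yI le_xy) andbT; apply: contra_neq neq_yp => eq_xp.
by move: (implyP (p_max y) yI); rewrite lt_def -eq_xp le_xy andbT negbK eq_sym => /eqP.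
Qed.

Lemma toggle_other K p x : x != p -> (x \in toggle p K) = (x \in K).
Proof.
move=> neq_xp; rewrite /toggle; case: ifP => _; first by rewrite !inE (negbTE neq_xp).
by case: ifP => _ //; rewrite !inE neq_xp.
Qed.

Lemma toggle_self K p : (p \in toggle p K) = ((p \in K) != toggleable p K).
Proof.
rewrite /toggleable /toggle; case: ifP => [|_].
  by rewrite inE setU11 => /andP[/negbTE->].
by case: ifP => [|_]; [rewrite !inE eqxx => /andP[->] | case: (p \in K)].
Qed.

Lemma toggle_ideal K p : is_ideal K -> is_ideal (toggle p K).
Proof.
move=> K_ideal; rewrite /toggle.
by case: ifP => [/(ideal_setU1 K_ideal) // | _]; case: ifP => // /(ideal_setD1 K_ideal).
Qed.

Lemma toggleK K p : is_ideal K -> toggle p (toggle p K) = K.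
Proof.
move=> K_ideal; apply/setP=> x; case: (eqVneq x p) => [-> | neq_xp]; last first.
  by rewrite !toggle_other.
rewrite !toggle_self (@eq_toggleable (toggle p K) K) ?toggle_ideal //.
  by case: (p \in K); case: toggleable.
move=> z /orP[] /andP[lt_zp _]; rewrite toggle_other //.
  by rewrite lt_eqF.
by rewrite gt_eqF.
Qed.

Lemma foldr_toggle_ideal l K : is_ideal K -> is_ideal (foldr toggle K l).
Proof. by move=> K_ideal; elim: l => //= a l; apply: toggle_ideal. Qed.

Lemma foldr_toggle_inj l K1 K2 : is_ideal K1 -> is_ideal K2 ->
  foldr toggle K1 l = foldr toggle K2 l -> K1 = K2.
Proof.
move=> K1_ideal K2_ideal; elim: l => //= a l IHl eqK; apply: IHl.
by rewrite -(toggleK a (foldr_toggle_ideal l K1_ideal)) eqK toggleK ?foldr_toggle_ideal.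
Qed.

Lemma foldr_toggle_mem l K x : is_ideal K -> uniq l ->
  {in l &, forall a b, ~~ covers a b} ->
  (x \in foldr toggle K l) = ((x \in K) != (x \in l) && toggleable x K).
Proof.
move=> K_ideal; elim: l x => [x _ _ | a l IHl x /= /andP[al l_uniq] no_cover].
  by case: (x \in K).
have {}IHl y : (y \in foldr toggle K l) = ((y \in K) != (y \in l) && toggleable y K).
  by apply: IHl => // u v ul vl; apply: no_cover; rewrite inE ?ul ?vl orbT.
rewrite inE; case: (eqVneq x a) => [-> | neq_xa] /=; last by rewrite toggle_other.
have <- : toggleable a (foldr toggle K l) = toggleable a K.
  apply: eq_toggleable; rewrite ?foldr_toggle_ideal // => z a_cover.
  rewrite IHl; case: (boolP (z \in l)) => zl; last by case: (z \in K).
  have : ~~ covers z a && ~~ covers a z by rewrite !no_cover ?inE ?zl ?eqxx ?orbT.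
  by rewrite -negb_or a_cover.
by rewrite toggle_self IHl (negbTE al); case: (a \in K).
Qed.

Lemma rowmotion_ideal J : is_ideal (rowmotion J).
Proof.
apply/idealP=> x y; rewrite !inE => /existsP[z /andP[z_min le_yz]] le_xy.
by apply/existsP; exists z; rewrite z_min (le_trans le_xy le_yz).
Qed.

Lemma maxset_rowmotion J : Defs.maxset (rowmotion J) = minset_compl J.
Proof.
apply/setP=> x; apply/idP/idP.
  rewrite inE => /andP[]; rewrite inE => /existsP[y /andP[y_min le_xy]] /forallP x_max.
  move: le_xy; rewrite le_eqVlt => /orP[/eqP-> // | lt_xy].
  have y_row : y \in rowmotion J by rewrite inE; apply/existsP; exists y; rewrite y_min lexx.
  by move: (implyP (x_max y) y_row); rewrite lt_xy.
move=> x_min; rewrite !inE; apply/andP; split.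
  by apply/existsP; exists x; rewrite x_min lexx.
apply/forallP=> y; apply/implyP; rewrite inE => /existsP[z /andP[z_min le_yz]].
apply/negP=> lt_xy; move: x_min z_min; rewrite !inE => /andP[xJ _] /andP[_ /forallP below_z].
by move: (implyP (below_z x) (lt_le_trans lt_xy le_yz)); rewrite (negbTE xJ).
Qed.

Lemma idealE_minset_compl J : is_ideal J ->
  J = [set x | ~~ [exists y, (y \in minset_compl J) && (y <= x)%O]].
Proof.
move=> /idealP J_down; apply/setP=> x; rewrite inE; case: (boolP (x \in J)) => xJ.
  apply/esym/negP=> /existsP[y /andP[]]; rewrite inE => /andP[yJ _] le_yx.
  by rewrite (J_down y x xJ le_yx) in yJ.
apply/esym/negbF/existsP; have [y y_min le_yx] := exists_minset_compl xJ.
by exists y; rewrite y_min le_yx.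
Qed.

Lemma rowmotion_inj J1 J2 : is_ideal J1 -> is_ideal J2 ->
  rowmotion J1 = rowmotion J2 -> J1 = J2.
Proof.
move=> J1_ideal J2_ideal eq_row.
have eq_min : minset_compl J1 = minset_compl J2 by rewrite -!maxset_rowmotion eq_row.
by rewrite (idealE_minset_compl J1_ideal) (idealE_minset_compl J2_ideal) eq_min.
Qed.

Lemma ideal_covered_setD1 I x : is_ideal I -> x \in Defs.maxset I ->
  ideal_covered (I :\ x) I.
Proof.
move=> I_ideal x_max; have xI : x \in I by move: x_max; rewrite inE => /andP[].
apply/and4P; split; rewrite ?ideal_setD1 ?properD1 //.
apply/forallP=> K; apply/negP=> /and3P[_ /proper_card lt_K /proper_card lt_I].
by move: (leq_ltn_trans lt_K lt_I); rewrite (cardsD1 x I) xI add1n ltnn.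
Qed.

Lemma ideal_coveredP J I : is_ideal I ->
  reflect (exists2 x, x \in Defs.maxset I & J = I :\ x) (ideal_covered J I).
Proof.
move=> I_ideal; apply: (iffP idP) => [|[x x_max ->]]; last exact: ideal_covered_setD1.
case/and4P=> J_ideal _ /properP[sub_JI [x xI xJ]] /forallP no_between.
have [y y_min le_yx] := exists_minset_compl xJ.
have yJ : y \notin J by move: y_min; rewrite inE => /andP[].
have yI : y \in I := idealP I I_ideal y x xI le_yx.
have eq_yJ : y |: J = I.
  apply/eqP; move: (no_between (y |: J)); rewrite ideal_setU1 //= negb_and.
  case/orP=> [/negP[] | ].
    by rewrite properUr // sub1set.
  by rewrite properEneq subUset sub1set yI sub_JI !andbT negbK.
exists y; last by rewrite -eq_yJ setU1K.
rewrite inE yI; apply/forallP=> z; apply/implyP; rewrite -eq_yJ !inE.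
case/orP=> [/eqP-> | zJ]; first by rewrite ltxx.
by apply: contra yJ => lt_yz; apply: (idealP J J_ideal) (ltW lt_yz).
Qed.

Lemma ddeg_maxset I : is_ideal I -> ddeg I = #|Defs.maxset I|.
Proof.
move=> I_ideal; rewrite /ddeg.
have -> : [set J | ideal_covered J I] = [set I :\ x | x in Defs.maxset I].
  by apply/setP=> J; rewrite inE; apply/(ideal_coveredP J I_ideal)/imsetP.
rewrite card_in_imset // => x y; rewrite !inE => /andP[xI _] _ eq_D1.
apply/eqP; apply: contraT => neq_xy.
by move: (setD11 x I); rewrite eq_D1 !inE neq_xy xI.
Qed.

Section OrbitAverage.
Variables (R : realFieldType) (f : {set T} -> {set T}).
Hypotheses (f_ideal : {homo f : K / is_ideal K})
  (f_inj : {in is_ideal &, injective f}).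

Lemma orbit_ideal I J : is_ideal I -> J \in fingraph.orbit f I -> is_ideal J.
Proof. by move=> I_ideal; apply: (@orbit_sub _ is_ideal f f_ideal I I_ideal J). Qed.

Definition orbit_uniform I : {set T} -> R :=
  fun J => if J \in fingraph.orbit f I then ((size (fingraph.orbit f I))%:R^-1)%R else 0%R.

Definition orbit_toggle_symmetric I := forall p,
  \sum_(J <- fingraph.orbit f I) Tplus p J = \sum_(J <- fingraph.orbit f I) Tminus p J.

Lemma expect_orbit_uniform I (g : {set T} -> nat) : is_ideal I ->
  expect (orbit_uniform I) g
    = ((size (fingraph.orbit f I))%:R^-1 * \sum_(J <- fingraph.orbit f I) (g J)%:R)%R.
Proof.
move=> I_ideal; rewrite big_uniq ?fingraph.orbit_uniq //= GRing.mulr_sumr /expect.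
rewrite big_mkcond [RHS]big_mkcond /=; apply: eq_bigr => J _; rewrite /orbit_uniform.
case: (boolP (J \in fingraph.orbit f I)) => [J_orbit | _].
  by rewrite (orbit_ideal I_ideal J_orbit).
by case: (is_ideal J); rewrite ?mul0r.
Qed.

Lemma sum_orbit_map I (F : {set T} -> nat) : is_ideal I ->
  \sum_(J <- fingraph.orbit f I) F (f J) = \sum_(J <- fingraph.orbit f I) F J.
Proof. exact: (@big_map_orbit _ is_ideal f f_ideal f_inj). Qed.

Lemma orbit_uniform_distribution I : is_ideal I -> is_distribution (orbit_uniform I).
Proof.
move=> I_ideal; split=> [J _ | ].
  by rewrite /orbit_uniform; case: ifP; rewrite ?invr_ge0 ?ler0n.
have := expect_orbit_uniform (fun _ => 1%N) I_ideal; rewrite /expect.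
under eq_bigr do rewrite mulr1.
rewrite -natr_sum sum1_size => ->; apply: mulVf.
by rewrite pnatr_eq0 -lt0n fingraph.size_orbit fingraph.order_gt0.
Qed.

Theorem orbit_avg_antichain_tCDE I : tCDE (T := T) R -> is_ideal I ->
  orbit_toggle_symmetric I -> orbit_avg_antichain f I = expect (@uni d T R) ddeg.
Proof.
move=> J_tCDE I_ideal I_sym.
have mu_sym : toggle_symmetric (orbit_uniform I).
  by move=> p; rewrite !expect_orbit_uniform // -!natr_sum I_sym.
rewrite -(J_tCDE _ (orbit_uniform_distribution I_ideal) mu_sym) expect_orbit_uniform //.
rewrite /orbit_avg_antichain mulrC; congr (_ * _)%R.
by apply: eq_big_seq => J J_orbit; rewrite ddeg_maxset // (orbit_ideal I_ideal J_orbit).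
Qed.

End OrbitAverage.

Lemma rowmotion_orbit_toggle_symmetric I : is_ideal I ->
  orbit_toggle_symmetric rowmotion I.
Proof.
move=> I_ideal p; rewrite -(sum_orbit_map _ _ (Tminus p) I_ideal).
- by apply: eq_bigr => J _; rewrite /Tminus maxset_rowmotion.
- by move=> K _; apply: rowmotion_ideal.
- exact: rowmotion_inj.
Qed.

Section Ranked.
Variable rk : T -> nat.
Hypothesis rk_cover : forall x y, covers x y -> rk y = (rk x).+1.

Lemma cover_rank_neq x y : covers x y -> rk x != rk y.
Proof. by move/rk_cover->; rewrite neq_ltn ltnSn. Qed.

Lemma rank_toggle_ideal i K : is_ideal K -> is_ideal (rank_toggle rk i K).
Proof. exact: foldr_toggle_ideal. Qed.

Lemma rank_toggle_mem i K x : is_ideal K ->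
  (x \in rank_toggle rk i K) = ((x \in K) != (rk x == i) && toggleable x K).
Proof.
move=> K_ideal; rewrite /rank_toggle foldr_toggle_mem //.
- by rewrite mem_filter mem_enum andbT.
- exact/filter_uniq/enum_uniq.
- move=> a b; rewrite !mem_filter => /andP[/eqP rk_a _] /andP[/eqP rk_b _].
  by apply/negP=> /cover_rank_neq; rewrite rk_a rk_b eqxx.
Qed.

Lemma rank_toggle_other i K x : is_ideal K -> rk x != i ->
  (x \in rank_toggle rk i K) = (x \in K).
Proof. by move=> K_ideal /negbTE rk_x; rewrite rank_toggle_mem // rk_x; case: (x \in K). Qed.

Lemma minset_compl_rank_toggle K p : is_ideal K ->
  (p \in minset_compl (rank_toggle rk (rk p) K)) = (p \in Defs.maxset K).
Proof.
move=> K_ideal; have K'_ideal := rank_toggle_ideal (rk p) K_ideal.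
rewrite minset_complE // maxsetE // rank_toggle_mem // eqxx toggleableE //.
rewrite (@eq_lower_covers_in p _ K) => [|z /cover_rank_neq]; last exact: rank_toggle_other.
case: (boolP (p \in K)) => pK /=.
  by rewrite ideal_lower_covers_in //; case: upper_covers_out.
by rewrite ideal_upper_covers_out //; case: lower_covers_in.
Qed.

Lemma maxset_rank_toggle K p : is_ideal K ->
  (p \in Defs.maxset (rank_toggle rk (rk p) K)) = (p \in minset_compl K).
Proof.
move=> K_ideal; have K'_ideal := rank_toggle_ideal (rk p) K_ideal.
rewrite maxsetE // minset_complE // rank_toggle_mem // eqxx toggleableE //.
rewrite (@eq_upper_covers_out p _ K) => [|z /cover_rank_neq]; last first.
  by rewrite eq_sym; exact: rank_toggle_other.
case: (boolP (p \in K)) => pK /=.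
  by rewrite ideal_lower_covers_in //; case: upper_covers_out.
by rewrite ideal_upper_covers_out //; case: lower_covers_in.
Qed.

Definition rank_toggles (ks : seq nat) K := foldr (rank_toggle rk) K ks.

Lemma rowmotion_sigmaE r (s : 'S_r.+1) :
  rowmotion_sigma rk s =1 rank_toggles [seq val (s i) | i <- enum 'I_r.+1].
Proof. by move=> K; rewrite /rank_toggles foldr_map. Qed.

Lemma rank_toggles_ideal ks : {homo rank_toggles ks : K / is_ideal K}.
Proof. by move=> K K_ideal; elim: ks => //= i ks; apply: rank_toggle_ideal. Qed.

Lemma rank_toggles_inj ks : {in is_ideal &, injective (rank_toggles ks)}.
Proof.
move=> K1 K2 K1_ideal K2_ideal; elim: ks => //= i ks IHks /foldr_toggle_inj eqK.
by apply: IHks; apply: eqK; apply: rank_toggles_ideal.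
Qed.

Lemma rank_toggles_other ks K x : is_ideal K -> rk x \notin ks ->
  (x \in rank_toggles ks K) = (x \in K).
Proof.
move=> K_ideal; elim: ks => //= i ks IHks; rewrite inE negb_or => /andP[rk_x /IHks <-].
by rewrite rank_toggle_other ?rank_toggles_ideal.
Qed.

Lemma minset_compl_rank_toggles ks K p : is_ideal K -> rk p \notin ks ->
  (forall z, covers z p -> rk z \notin ks) ->
  (p \in minset_compl (rank_toggles ks K)) = (p \in minset_compl K).
Proof.
move=> K_ideal rk_p rk_lower; rewrite !minset_complE ?rank_toggles_ideal //.
rewrite rank_toggles_other //; congr (_ && _); apply: eq_lower_covers_in => z /rk_lower.
exact: rank_toggles_other.
Qed.

Lemma maxset_rank_toggles ks K p : is_ideal K -> rk p \notin ks ->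
  (forall z, covers p z -> rk z \notin ks) ->
  (p \in Defs.maxset (rank_toggles ks K)) = (p \in Defs.maxset K).
Proof.
move=> K_ideal rk_p rk_upper; rewrite !maxsetE ?rank_toggles_ideal //.
rewrite rank_toggles_other //; congr (_ && _); apply: eq_upper_covers_out => z /rk_upper.
exact: rank_toggles_other.
Qed.

Lemma rank_toggles_orbit_ideal ks I J : is_ideal I ->
  J \in fingraph.orbit (rank_toggles ks) I -> is_ideal J.
Proof. exact/orbit_ideal/rank_toggles_ideal. Qed.

Lemma sum_orbit_rank_toggles ks I (F : {set T} -> nat) : is_ideal I ->
  \sum_(J <- fingraph.orbit (rank_toggles ks) I) F (rank_toggles ks J)
    = \sum_(J <- fingraph.orbit (rank_toggles ks) I) F J.
Proof. exact/sum_orbit_map/rank_toggles_inj/rank_toggles_ideal. Qed.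

Section SplitRankToggles.
Variables (ks1 ks2 : seq nat) (p : T).
Hypotheses (rk_p1 : rk p \notin ks1) (rk_p2 : rk p \notin ks2)
  (ks12 : {in ks1, forall j, j \notin ks2}).

Local Notation g := (rank_toggles (ks1 ++ rk p :: ks2)).
Local Notation X := (rank_toggles ks2).

Lemma rank_toggles_split K : g K = rank_toggles ks1 (rank_toggle rk (rk p) (X K)).
Proof. by rewrite /rank_toggles foldr_cat. Qed.

Lemma toggle_count J : is_ideal J ->
  (p \in g J) + Tminus p (X J) = (p \in J) + Tplus p (X J).
Proof.
move=> J_ideal; have X_ideal := rank_toggles_ideal ks2 J_ideal.
rewrite /Tminus /Tplus maxset_toggleable minset_compl_toggleable rank_toggles_split.
rewrite rank_toggles_other ?rank_toggle_mem ?eqxx ?rank_toggles_other //.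
  by case: (p \in J); case: toggleable.
exact: rank_toggle_ideal.
Qed.

Lemma sum_orbit_Tplus_Tminus I : is_ideal I ->
  \sum_(J <- fingraph.orbit g I) Tplus p (X J)
    = \sum_(J <- fingraph.orbit g I) Tminus p (X J).
Proof.
move=> I_ideal.
have count_eq : \sum_(J <- fingraph.orbit g I) ((p \in g J) + Tminus p (X J))
    = \sum_(J <- fingraph.orbit g I) ((p \in J) + Tplus p (X J)).
  by apply: eq_big_seq => J /(rank_toggles_orbit_ideal I_ideal); apply: toggle_count.
rewrite !big_split /= (sum_orbit_rank_toggles _ (fun K => (p \in K) : nat)) // in count_eq.
exact/esym/(addnI count_eq).
Qed.

Lemma sum_orbit_Tplus_cases I : is_ideal I ->
  let s := fingraph.orbit g I in
  \sum_(J <- s) Tplus p J = \sum_(J <- s) Tplus p (X J) \/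
  \sum_(J <- s) Tplus p J = \sum_(J <- s) Tminus p (X J).
Proof.
move=> I_ideal s.
have s_ideal J : J \in s -> is_ideal J by apply: rank_toggles_orbit_ideal.
case: (boolP [exists z, covers z p && (rk z \in ks1)]) => [|no_lower_ks1].
  case/existsP=> z0 /andP[cover_z0 z0_ks1]; left; apply: eq_big_seq => J /s_ideal J_ideal.
  rewrite /Tplus minset_compl_rank_toggles // => z /rk_cover.
  by rewrite (rk_cover cover_z0) => /succn_inj <-; apply: ks12.
right; rewrite -sum_orbit_rank_toggles //.
apply: eq_big_seq => J /s_ideal J_ideal; have X_ideal := rank_toggles_ideal ks2 J_ideal.
rewrite /Tplus /Tminus rank_toggles_split minset_compl_rank_toggles //.
- by rewrite minset_compl_rank_toggle.
- exact: rank_toggle_ideal.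
- move=> z cover_z; apply: contra no_lower_ks1 => z_ks1.
  by apply/existsP; exists z; rewrite cover_z.
Qed.

Lemma sum_orbit_Tminus_cases I : is_ideal I ->
  let s := fingraph.orbit g I in
  \sum_(J <- s) Tminus p J = \sum_(J <- s) Tminus p (X J) \/
  \sum_(J <- s) Tminus p J = \sum_(J <- s) Tplus p (X J).
Proof.
move=> I_ideal s.
have s_ideal J : J \in s -> is_ideal J by apply: rank_toggles_orbit_ideal.
case: (boolP [exists z, covers p z && (rk z \in ks1)]) => [|no_upper_ks1].
  case/existsP=> z0 /andP[cover_z0 z0_ks1]; left; apply: eq_big_seq => J /s_ideal J_ideal.
  rewrite /Tminus maxset_rank_toggles // => z /rk_cover.
  by rewrite -(rk_cover cover_z0) => ->; apply: ks12.
right; rewrite -sum_orbit_rank_toggles //.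
apply: eq_big_seq => J /s_ideal J_ideal; have X_ideal := rank_toggles_ideal ks2 J_ideal.
rewrite /Tplus /Tminus rank_toggles_split maxset_rank_toggles //.
- by rewrite maxset_rank_toggle.
- exact: rank_toggle_ideal.
- move=> z cover_z; apply: contra no_upper_ks1 => z_ks1.
  by apply/existsP; exists z; rewrite cover_z.
Qed.

End SplitRankToggles.

Lemma rank_toggles_orbit_toggle_symmetric ks I : uniq ks -> (forall x, rk x \in ks) ->
  is_ideal I -> orbit_toggle_symmetric (rank_toggles ks) I.
Proof.
move=> ks_uniq rk_ks I_ideal p; case/splitPr: (rk_ks p) ks_uniq => ks1 ks2.
rewrite cat_uniq /= => /and3P[_ /norP[rk_p1 /hasPn ks21] /andP[rk_p2 _]].
have ks12 : {in ks1, forall j, j \notin ks2}.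
  by move=> j j1; apply: contraL j1 => /ks21.
have eq_X := sum_orbit_Tplus_Tminus rk_p1 rk_p2 I_ideal.
case: (sum_orbit_Tplus_cases rk_p1 rk_p2 ks12 I_ideal) => ->;
  by case: (sum_orbit_Tminus_cases rk_p1 rk_p2 ks12 I_ideal) => ->.
Qed.

End Ranked.
End Ideals.

Theorem corollary8p7 (R : realFieldType) (d : Order.disp_t) (T : finPOrderType d) :
  connected_poset (T := T) -> tCDE (T := T) R ->
  (forall I : {set T}, is_ideal I ->
     orbit_avg_antichain (R := R) rowmotion I = expect (@uni d T R) ddeg) /\
  (forall (rk : T -> nat) (r : nat), ranked rk -> r = (\max_(x : T) rk x)%N ->
   forall (s : 'S_r.+1) (I : {set T}), is_ideal I ->
     orbit_avg_antichain (R := R) (rowmotion_sigma rk s) I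
       = expect (@uni d T R) ddeg).
Proof.
move=> _ J_tCDE; split=> [I I_ideal | rk r [_ rk_cover] r_max s I I_ideal].
  apply: orbit_avg_antichain_tCDE => //.
  - by move=> K _; apply: rowmotion_ideal.
  - exact: rowmotion_orbit_toggle_symmetric.
rewrite /orbit_avg_antichain (eq_orbit (rowmotion_sigmaE rk s)) -/(orbit_avg_antichain _ I).
apply: orbit_avg_antichain_tCDE => //.
- exact: rank_toggles_ideal.
- apply: rank_toggles_orbit_toggle_symmetric => // [|x].
    by rewrite map_inj_uniq ?enum_uniq // => i j /val_inj/perm_inj.
  by apply: mem_map_perm_ord; rewrite ltnS r_max (leq_bigmax_cond (P := xpredT)).
Qed.
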